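(* Let $(X,\mu)$ be a discrete-time BRW whose generating function satisfies $G(z|x)=\frac{1}{1+\sum_ym_{xy}(1-z(y))}$ for all $z\in[0,1]^X$, $x\in X$ (e.g. a BRW with independent diffusion and $\rho_x(n)=\frac{1}{1+\bar\rho_x}(\frac{\bar\rho_x}{1+\bar\rho_x})^n$). Then there is global survival starting from $x$ if and only if there exists $v\in[0,1]^X$ with $v(x)>0$ such that $Mv(y)\ge\frac{v(y)}{1-v(y)}$ for all $y\in X$; equivalently, if and only if there exists such $v$ with $Mv(y)=\frac{v(y)}{1-v(y)}$ for all $y$.
   Context: $S_X:=\{f:X\to\mathbb N:\sum_yf(y)<\infty\}$; a discrete-time BRW $(X,\mu)$: probability measures $\mu_x$ on $S_X$, each particle at $x$ independently replaced by $f(y)$ particles at each $y$, $f\sim\mu_x$. $m_{xy}:=\sum_ff(y)\mu_x(f)$ with $\sup_x\sum_ym_{xy}<\infty$, $Mv(y):=\sum_wm_{yw}v(w)$. $G(z|x):=\sum_f\mu_x(f)\prod_yz(y)^{f(y)}$. Convention: $a/0=+\infty$ for $a>0$. Global survival from $x$: with positive probability, starting from one particle at $x$, particles are present at every generation. *)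

From Stdlib Require Import Reals List ClassicalEpsilon.
Import ListNotations.
Open Scope R_scope.

Definition finsum {T : Type} (f : T -> R) (l : list T) : R :=
  fold_right (fun a acc => f a + acc) 0 l.

(* s is the sum of the family f: supremum of the finite partial sums
   (meaningful for nonnegative families). *)
Definition HasSum {T : Type} (f : T -> R) (s : R) : Prop :=
  is_lub (fun r => exists l : list T, NoDup l /\ r = finsum f l) s.

(* The sum of f (defaults to 0 when the sum is infinite / does not exist;
   it is only used below on families whose sum is finite). *)
Definition tsum {T : Type} (f : T -> R) : R :=
  match excluded_middle_informative (exists s, HasSum f s) with
  | left H => proj1_sig (constructive_indefinite_description _ H)
  | right _ => 0
  end.

Definition SX (X : Type) : Type :=
  { f : X -> nat | exists l : list X, forall y, f y <> 0%nat -> In y l }.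

Definition cnt {X : Type} (f : SX X) (y : X) : nat := proj1_sig f y.

Definition decX {X : Type} : forall x y : X, {x = y} + {x <> y} :=
  fun x y => excluded_middle_informative (x = y).

Definition particles {X : Type} (f : SX X) : list X :=
  let l := proj1_sig (constructive_indefinite_description _ (proj2_sig f)) in
  flat_map (fun y => repeat y (cnt f y)) (nodup decX l).

Definition zeroC (X : Type) : SX X.
Proof. exists (fun _ => 0%nat). exists nil. intros y H; now apply H. Defined.

Definition deltaC {X : Type} (x : X) : SX X.
Proof.
  exists (fun y => if decX x y then 1%nat else 0%nat).
  exists [x]. intros y H. destruct (decX x y) as [e|e]; [left; exact e | now elim H].
Defined.

Definition is_prob {X : Type} (mu : X -> SX X -> R) : Prop :=
  forall x, (forall f, 0 <= mu x f) /\ HasSum (mu x) 1.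

Definition mm {X : Type} (mu : X -> SX X -> R) (x y : X) : R :=
  tsum (fun f : SX X => INR (cnt f y) * mu x f).

(* sup_x sum_y m_{xy} < infinity  (stated on finite partial sums so that all
   the series involved are genuinely finite) *)
Definition bounded_mean {X : Type} (mu : X -> SX X -> R) : Prop :=
  exists K : R, forall x (ly : list X) (lf : list (SX X)),
    NoDup ly -> NoDup lf ->
    finsum (fun y => finsum (fun f => INR (cnt f y) * mu x f) lf) ly <= K.

Definition Mop {X : Type} (mu : X -> SX X -> R) (v : X -> R) (y : X) : R :=
  tsum (fun w => mm mu y w * v w).

(* G(z|x) = sum_f mu_x(f) prod_y z(y)^{f(y)} *)
Definition Gen {X : Type} (mu : X -> SX X -> R) (z : X -> R) (x : X) : R :=
  tsum (fun f : SX X => mu x f * fold_right Rmult 1 (map z (particles f))).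

(* One-step transition probability: each particle (at position p_i) is
   independently replaced by f_i ~ mu_{p_i}; the new configuration is sum_i f_i. *)
Definition trans {X : Type} (mu : X -> SX X -> R) (eta zeta : SX X) : R :=
  let ps := particles eta in
  tsum (fun fs : { fs : list (SX X) |
                   length fs = length ps /\
                   forall y, cnt zeta y = fold_right (fun f acc => (cnt f y + acc)%nat) 0%nat fs } =>
          fold_right (fun pf acc => mu (fst pf) (snd pf) * acc) 1
                     (combine ps (proj1_sig fs))).

Fixpoint transN {X : Type} (mu : X -> SX X -> R) (n : nat) (eta zeta : SX X) : R :=
  match n with
  | O => if excluded_middle_informative (eta = zeta) then 1 else 0
  | S k => tsum (fun xi => transN mu k eta xi * trans mu xi zeta)
  end.

(* Global survival from x: with positive probability, starting from one particle
   at x, particles are present at every generation.  The event is the decreasing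
   intersection of {Z_n <> 0}, so its probability is inf_n P_x(Z_n <> 0). *)
Definition global_survival {X : Type} (mu : X -> SX X -> R) (x : X) : Prop :=
  exists eps : R, 0 < eps /\
    forall n : nat, 1 - transN mu n (deltaC x) (zeroC X) >= eps.

(* None stands for +infinity (v y = 1, i.e. a/0 with a = 1 > 0). *)
Definition ratio (a : R) : option R :=
  if Rlt_dec a 1 then Some (a / (1 - a)) else None.

Definition ge_ratio (b a : R) : Prop :=
  match ratio a with Some r => b >= r | None => False end.

Definition eq_ratio (b a : R) : Prop :=
  match ratio a with Some r => b = r | None => False end.

(* Write q_n(x) for the probability that the process started from one particle
   at x is extinct at generation n.  The proof has three layers.
   1. Summation of nonnegative families over arbitrary types (HasSum / tsum):
      uniqueness, linearity, reindexing, Tonelli, products and a monotone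
      convergence lemma.
   2. The branching property E_xi[z^{Z_1}] = prod_{particles p of xi} G(z|p),
      iterated to E_eta[z^{Z_n}] = (G^n z)^eta; with z = 0 this gives
      q_n = G^n(0), an increasing sequence dominated by every supersolution
      G(z) <= z in [0,1]^X.
   3. For G(z|y) = 1/(1 + M(1-z)(y)):
      - if M v >= v/(1-v) and v(x) > 0, then z = 1-v is a supersolution, so
        q_n(x) <= 1 - v(x) for all n and the process survives;
      - conversely, by monotone convergence the limit q = sup_n q_n is a fixed
        point of G, and if the process survives then v = 1 - q has v(x) > 0
        and solves M v = v/(1-v).  An exact solution is in particular a
        supersolution, which closes both equivalences. *)

From Stdlib Require Import Reals List ClassicalEpsilon Lra Lia Permutation
  FunctionalExtensionality ProofIrrelevance.
Import ListNotations.
Open Scope R_scope.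
Section FiniteSums.
Context {T : Type}.
Implicit Types (f g : T -> R) (l : list T).

Lemma finsum_app f l1 l2 : finsum f (l1 ++ l2) = finsum f l1 + finsum f l2.
Proof. induction l1 as [|a l1 IH]; simpl; [lra | rewrite IH; lra]. Qed.

Lemma finsum_plus f g l : finsum (fun a => f a + g a) l = finsum f l + finsum g l.
Proof. induction l as [|a l IH]; simpl; [lra | rewrite IH; lra]. Qed.

Lemma finsum_scal c f l : finsum (fun a => c * f a) l = c * finsum f l.
Proof. induction l as [|a l IH]; simpl; [lra | rewrite IH; lra]. Qed.

Lemma finsum_le f g l : (forall a, In a l -> f a <= g a) -> finsum f l <= finsum g l.
Proof.
  induction l as [|a l IH]; simpl; intros H; [lra|].
  assert (f a <= g a) by auto. assert (finsum f l <= finsum g l) by auto. lra.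
Qed.

Lemma finsum_nonneg f l : (forall a, 0 <= f a) -> 0 <= finsum f l.
Proof. intros H; induction l as [|a l IH]; simpl; [lra|]. specialize (H a); lra. Qed.

Lemma finsum_remove f l a : (forall a, 0 <= f a) ->
  (In a l -> f a + finsum f (remove decX a l) <= finsum f l) /\
  finsum f (remove decX a l) <= finsum f l.
Proof.
  intros Hf; induction l as [|b l [IHin IHle]]; simpl; [split; [tauto | lra]|].
  pose proof (Hf a); pose proof (Hf b).
  destruct (decX a b) as [<-|ne]; simpl; split; try lra.
  intros [->|Hin]; [congruence|]. specialize (IHin Hin); lra.
Qed.

Lemma finsum_incl f l1 l2 : (forall a, 0 <= f a) -> NoDup l1 -> incl l1 l2 ->
  finsum f l1 <= finsum f l2.
Proof.
  intros Hf Hnd; revert l2; induction Hnd as [|a l1 Hna Hnd IH]; intros l2 Hi; simpl.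
  - apply finsum_nonneg; auto.
  - assert (Ha : In a l2) by (apply Hi; left; auto).
    assert (finsum f l1 <= finsum f (remove decX a l2)).
    { apply IH. intros b Hb. apply in_in_remove; [intros ->; contradiction | apply Hi; right; auto]. }
    pose proof (proj1 (finsum_remove f l2 a Hf) Ha). lra.
Qed.

Definition merge l1 l2 : list T := nodup decX (l1 ++ l2).

Lemma merge_NoDup l1 l2 : NoDup (merge l1 l2).
Proof. apply NoDup_nodup. Qed.

Lemma finsum_merge f l1 l2 : (forall a, 0 <= f a) ->
  (NoDup l1 -> finsum f l1 <= finsum f (merge l1 l2)) /\
  (NoDup l2 -> finsum f l2 <= finsum f (merge l1 l2)).
Proof.
  intros Hf; split; intros Hnd; apply finsum_incl; auto;
    intros a Ha; apply nodup_In, in_or_app; auto.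
Qed.

Lemma finsum_single f l a : NoDup l -> (forall b, b <> a -> f b = 0) ->
  finsum f l = if excluded_middle_informative (In a l) then f a else 0.
Proof.
  intros Hnd Hz; induction Hnd as [|b l Hnb Hnd IH]; simpl.
  - destruct excluded_middle_informative as [[]|]; lra.
  - rewrite IH. destruct (excluded_middle_informative (In a l)) as [i|ni];
    destruct (excluded_middle_informative (b = a \/ In a l)) as [i'|ni'].
    + assert (b <> a) by (intros ->; contradiction). rewrite Hz; auto; lra.
    + tauto.
    + destruct i' as [<-|]; [lra|tauto].
    + assert (b <> a) by tauto. rewrite Hz; auto; lra.
Qed.

Lemma finsum_monotone_limit (fn : nat -> T -> R) f l :
  (forall n m a, (n <= m)%nat -> fn n a <= fn m a) ->
  (forall a e, 0 < e -> exists n, f a - e < fn n a) ->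
  forall e, 0 < e -> exists N, finsum f l - e < finsum (fn N) l.
Proof.
  intros Hmono Happ; induction l as [|a l IH]; intros e He; simpl.
  - exists 0%nat; lra.
  - destruct (IH (e / 2) ltac:(lra)) as [N1 H1]. destruct (Happ a (e / 2) ltac:(lra)) as [N2 H2].
    exists (Nat.max N1 N2).
    assert (finsum (fn N1) l <= finsum (fn (Nat.max N1 N2)) l)
      by (apply finsum_le; intros; apply Hmono; lia).
    pose proof (Hmono N2 (Nat.max N1 N2) a ltac:(lia)). lra.
Qed.

End FiniteSums.

Lemma finsum_swap {I J : Type} (b : I -> J -> R) li lj :
  finsum (fun i => finsum (b i) lj) li = finsum (fun j => finsum (fun i => b i j) li) lj.
Proof.
  induction li as [|i li IH]; simpl.
  - induction lj; simpl; lra.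
  - rewrite IH, <- finsum_plus. reflexivity.
Qed.

Lemma finsum_map {A B : Type} (f : B -> R) (g : A -> B) l :
  finsum f (map g l) = finsum (fun a => f (g a)) l.
Proof. induction l as [|a l IH]; simpl; [lra | rewrite IH; lra]. Qed.

Lemma finsum_prod {A B : Type} (h : A * B -> R) la lb :
  finsum h (list_prod la lb) = finsum (fun a => finsum (fun b => h (a, b)) lb) la.
Proof.
  induction la as [|a la IH]; simpl; [lra|]. rewrite finsum_app, finsum_map, IH. lra.
Qed.

Lemma NoDup_prod {A B : Type} (la : list A) (lb : list B) :
  NoDup la -> NoDup lb -> NoDup (list_prod la lb).
Proof.
  intros Ha Hb; induction Ha as [|a la Hna Hnd IH]; simpl; [constructor|].
  apply NoDup_app; auto.
  - apply FinFun.Injective_map_NoDup; auto. intros x y H; congruence.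
  - intros [a' b'] H1 H2. apply in_map_iff in H1 as [y [Hy _]]. inversion Hy; subst.
    apply in_prod_iff in H2 as [H2 _]. contradiction.
Qed.

Definition SumLe {T : Type} (f : T -> R) (B : R) : Prop :=
  forall l, NoDup l -> finsum f l <= B.

Section Summation.
Context {T : Type}.
Implicit Types (f g : T -> R) (l : list T).

Lemma hs_ub f s : HasSum f s -> SumLe f s.
Proof. intros [H _] l Hl. apply H. eauto. Qed.

Lemma hs_least f s B : HasSum f s -> SumLe f B -> s <= B.
Proof. intros [_ H] HB. apply H. intros r [l [Hl ->]]. auto. Qed.

Lemma hs_intro f s : SumLe f s -> (forall B, SumLe f B -> s <= B) -> HasSum f s.
Proof.
  intros H1 H2; split.
  - intros r [l [Hl ->]]; auto.
  - intros B HB. apply H2. intros l Hl. apply HB; eauto.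
Qed.

Lemma hs_unique f s t : HasSum f s -> HasSum f t -> s = t.
Proof. intros H1 H2. apply Rle_antisym; eapply hs_least; eauto using hs_ub. Qed.

Lemma hs_nonneg f s : HasSum f s -> 0 <= s.
Proof. intros H. apply (hs_ub f s H nil). constructor. Qed.

Lemma hs_approx f s d : HasSum f s -> 0 < d -> exists l, NoDup l /\ s - d < finsum f l.
Proof.
  intros Hs Hd. apply NNPP. intros Hno. assert (s <= s - d); [|lra].
  eapply hs_least; [exact Hs|]. intros l Hl.
  apply Rnot_lt_le. intros Hlt. apply Hno. exists l; split; auto; lra.
Qed.

Lemma tsum_hs f s : HasSum f s -> tsum f = s.
Proof.
  intros H. unfold tsum. destruct excluded_middle_informative as [e|n].
  - destruct constructive_indefinite_description as [t Ht]; simpl. eapply hs_unique; eauto.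
  - exfalso; eauto.
Qed.

Lemma tsum_default f : ~ (exists s, HasSum f s) -> tsum f = 0.
Proof. intros H. unfold tsum. destruct excluded_middle_informative; tauto. Qed.

Lemma hs_tsum f B : SumLe f B -> HasSum f (tsum f).
Proof.
  intros H. destruct (completeness (fun r => exists l, NoDup l /\ r = finsum f l)) as [s Hs].
  - exists B. intros r [l [Hl ->]]; auto.
  - exists 0, nil. split; [constructor | reflexivity].
  - rewrite (tsum_hs f s Hs). exact Hs.
Qed.

Lemma tsum_nonneg f : (forall a, 0 <= f a) -> 0 <= tsum f.
Proof.
  intros Hf. unfold tsum. destruct excluded_middle_informative as [e|n]; [|lra].
  destruct constructive_indefinite_description as [t Ht]; simpl. eapply hs_nonneg; eauto.
Qed.

Lemma hs_le f g s t : (forall a, f a <= g a) -> HasSum f s -> HasSum g t -> s <= t.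
Proof.
  intros H Hf Hg. eapply hs_least; eauto. intros l Hl.
  eapply Rle_trans; [apply finsum_le; intros; apply H | apply hs_ub; auto].
Qed.

Lemma hs_dominated f g t : (forall a, 0 <= f a <= g a) -> HasSum g t -> HasSum f (tsum f).
Proof.
  intros Hfg Hg. apply hs_tsum with t. intros l Hl.
  eapply Rle_trans; [|apply (hs_ub _ _ Hg l Hl)]. apply finsum_le. intros a _; apply Hfg.
Qed.

Lemma hs_ext f g s : (forall a, f a = g a) -> HasSum f s -> HasSum g s.
Proof. intros H. replace g with f; auto. apply functional_extensionality; auto. Qed.

Lemma tsum_ext f g : (forall a, f a = g a) -> tsum f = tsum g.
Proof. intros H. replace g with f; auto. apply functional_extensionality; auto. Qed.

Lemma hs_zero : HasSum (fun _ : T => 0) 0.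
Proof.
  apply hs_intro.
  - intros l _. induction l; simpl; lra.
  - intros B HB. apply (HB nil); constructor.
Qed.

Lemma hs_scale c f s : 0 <= c -> HasSum f s -> HasSum (fun a => c * f a) (c * s).
Proof.
  intros Hc Hs. destruct (Req_dec c 0) as [->|Hc0].
  - eapply hs_ext; [|rewrite Rmult_0_l; apply hs_zero]. intros; simpl; lra.
  - apply hs_intro.
    + intros l Hl. rewrite finsum_scal. apply Rmult_le_compat_l; auto. apply hs_ub; auto.
    + intros B HB. assert (s <= B / c).
      { eapply hs_least; eauto. intros l Hl. specialize (HB l Hl). rewrite finsum_scal in HB.
        apply Rmult_le_reg_l with c; [lra|]. field_simplify; lra. }
      apply Rmult_le_reg_l with (/ c); [apply Rinv_0_lt_compat; lra|].
      replace (/ c * (c * s)) with s by (field; lra).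
      replace (/ c * B) with (B / c) by (unfold Rdiv; ring). auto.
Qed.

Lemma tsum_scale c f : 0 <= c -> tsum (fun a => c * f a) = c * tsum f.
Proof.
  intros Hc. destruct (excluded_middle_informative (exists s, HasSum f s)) as [[s Hs]|n].
  - rewrite (tsum_hs f s Hs). apply tsum_hs. apply hs_scale; auto.
  - rewrite (tsum_default f n). destruct (Req_dec c 0) as [->|Hc0].
    + rewrite (tsum_hs _ 0); [lra|]. eapply hs_ext; [|apply hs_zero]. intros; simpl; lra.
    + rewrite tsum_default; [lra|]. intros [t Ht]. apply n. exists (/ c * t).
      eapply hs_ext; [|apply hs_scale; [|exact Ht]].
      * intros a; simpl. field; auto.
      * left; apply Rinv_0_lt_compat; lra.
Qed.

Lemma hs_single f a : (forall b, 0 <= f b) -> (forall b, b <> a -> f b = 0) -> HasSum f (f a).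
Proof.
  intros Hf Hz. apply hs_intro.
  - intros l Hl. rewrite (finsum_single f l a Hl Hz). destruct excluded_middle_informative; auto; lra.
  - intros B HB. specialize (HB [a] (NoDup_cons _ (fun H : In _ nil => H) (NoDup_nil _))).
    simpl in HB. lra.
Qed.

Lemma hs_add f g s t : (forall a, 0 <= f a) -> (forall a, 0 <= g a) ->
  HasSum f s -> HasSum g t -> HasSum (fun a => f a + g a) (s + t).
Proof.
  intros Hf Hg Hs Ht. apply hs_intro.
  - intros l Hl. rewrite finsum_plus.
    pose proof (hs_ub f s Hs l Hl). pose proof (hs_ub g t Ht l Hl). lra.
  - intros B HB.
    assert (Hsplit : forall l1 l2, NoDup l1 -> NoDup l2 -> finsum f l1 + finsum g l2 <= B).
    { intros l1 l2 H1 H2.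
      pose proof (proj1 (finsum_merge f l1 l2 Hf) H1).
      pose proof (proj2 (finsum_merge g l1 l2 Hg) H2).
      pose proof (HB _ (merge_NoDup l1 l2)) as HH. rewrite finsum_plus in HH. lra. }
    assert (s <= B - t); [|lra].
    eapply hs_least; eauto. intros l1 H1.
    assert (t <= B - finsum f l1); [|lra].
    eapply hs_least; eauto. intros l2 H2. pose proof (Hsplit l1 l2 H1 H2). lra.
Qed.

Lemma hs_monotone_limit (fn : nat -> T -> R) f s :
  (forall n a, 0 <= fn n a <= f a) ->
  (forall n m a, (n <= m)%nat -> fn n a <= fn m a) ->
  (forall a e, 0 < e -> exists n, f a - e < fn n a) ->
  HasSum f s -> forall d, 0 < d -> exists N, s - d <= tsum (fn N).
Proof.
  intros Hbd Hmono Happ Hs d Hd.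
  destruct (hs_approx f s (d / 2) Hs ltac:(lra)) as [l [Hl Hsl]].
  destruct (finsum_monotone_limit fn f l Hmono Happ (d / 2) ltac:(lra)) as [N HN].
  exists N. pose proof (hs_ub _ _ (hs_dominated (fn N) f s (Hbd N) Hs) l Hl). lra.
Qed.

End Summation.

Lemma hs_reindex {A B : Type} (g : A -> B) (f : B -> R) s :
  (forall b, 0 <= f b) -> (forall a1 a2, g a1 = g a2 -> a1 = a2) ->
  (forall b, f b <> 0 -> exists a, g a = b) ->
  (HasSum (fun a => f (g a)) s <-> HasSum f s).
Proof.
  intros Hf Hinj Hsur.
  assert (E1 : forall la, NoDup la ->
            exists lb, NoDup lb /\ finsum (fun a => f (g a)) la = finsum f lb).
  { intros la Hla. exists (map g la). split.
    - apply FinFun.Injective_map_NoDup; auto.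
    - rewrite finsum_map; auto. }
  assert (E2 : forall lb, NoDup lb -> exists la, NoDup la /\
            finsum f lb = finsum (fun a => f (g a)) la /\ (forall a, In a la -> In (g a) lb)).
  { intros lb Hlb; induction Hlb as [|b lb Hnb Hnd IH].
    - exists nil; split; [constructor | split; [reflexivity | intros a []]].
    - destruct IH as [la [H1 [H2 H3]]].
      destruct (Req_dec (f b) 0) as [e|n].
      + exists la; repeat split; auto.
        * simpl; rewrite e, H2; lra.
        * intros a Ha; right; auto.
      + destruct (Hsur b n) as [a Ha]. exists (a :: la); repeat split.
        * constructor; auto. intros Hin. apply H3 in Hin. rewrite Ha in Hin. contradiction.
        * simpl. rewrite Ha, H2. reflexivity.
        * intros a' [<-|Hin]; [left; auto | right; auto]. }
  split; intros H; apply hs_intro.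
  - intros lb Hlb. destruct (E2 lb Hlb) as [la [H1 [H2 _]]]. rewrite H2. apply (hs_ub _ _ H); auto.
  - intros B0 HB. eapply hs_least; eauto. intros la Hla. destruct (E1 la Hla) as [lb [H1 H2]].
    rewrite H2; auto.
  - intros la Hla. destruct (E1 la Hla) as [lb [H1 H2]]. rewrite H2. apply (hs_ub _ _ H); auto.
  - intros B0 HB. eapply hs_least; eauto. intros lb Hlb. destruct (E2 lb Hlb) as [la [H1 [H2 _]]].
    rewrite H2; auto.
Qed.

Lemma tsum_reindex {A B : Type} (g : A -> B) (f : B -> R) :
  (forall b, 0 <= f b) -> (forall a1 a2, g a1 = g a2 -> a1 = a2) ->
  (forall b, f b <> 0 -> exists a, g a = b) ->
  tsum (fun a => f (g a)) = tsum f.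
Proof.
  intros H1 H2 H3. destruct (excluded_middle_informative (exists s, HasSum f s)) as [[s Hs]|n].
  - rewrite (tsum_hs f s Hs). apply tsum_hs. apply (hs_reindex g f s); auto.
  - rewrite (tsum_default f n). apply tsum_default. intros [s Hs]. apply n. exists s.
    apply (hs_reindex g f s); auto.
Qed.

Lemma finsum_of_sums_le {I J : Type} (b : I -> J -> R) (s : I -> R) (li : list I) (B : R) :
  (forall i j, 0 <= b i j) -> (forall i, HasSum (b i) (s i)) ->
  (forall lj, NoDup lj -> finsum (fun i => finsum (b i) lj) li <= B) -> finsum s li <= B.
Proof.
  intros Hb Hs. revert B; induction li as [|i li IH]; intros B H; simpl.
  - specialize (H nil (NoDup_nil _)). simpl in H. auto.
  - assert (finsum s li <= B - s i); [|lra].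
    apply IH. intros lj Hlj.
    assert (s i <= B - finsum (fun i0 => finsum (b i0) lj) li); [|lra].
    eapply hs_least; [apply Hs|]. intros lj' Hlj'.
    pose proof (proj1 (finsum_merge (b i) lj' lj (Hb i)) Hlj').
    assert (finsum (fun i0 => finsum (b i0) lj) li <=
            finsum (fun i0 => finsum (b i0) (merge lj' lj)) li).
    { apply finsum_le. intros i0 _. apply (proj2 (finsum_merge (b i0) lj' lj (Hb i0)) Hlj). }
    specialize (H _ (merge_NoDup lj' lj)). simpl in H. lra.
Qed.

Lemma tonelli {I J : Type} (b : I -> J -> R) (s : I -> R) (S : R) :
  (forall i j, 0 <= b i j) -> (forall i, HasSum (b i) (s i)) -> HasSum s S ->
  HasSum (fun j => tsum (fun i => b i j)) S.
Proof.
  intros Hb Hs HS.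
  assert (Hcol : forall j, HasSum (fun i => b i j) (tsum (fun i => b i j))).
  { intros j. apply hs_tsum with S. intros li Hli.
    eapply Rle_trans; [|apply (hs_ub s S HS li Hli)]. apply finsum_le. intros i _.
    pose proof (hs_ub _ _ (Hs i) [j] (NoDup_cons _ (fun H : In _ nil => H) (NoDup_nil _))).
    simpl in H. lra. }
  apply hs_intro.
  - intros lj Hlj. apply (finsum_of_sums_le (fun j i => b i j)); auto.
    intros li Hli. rewrite <- finsum_swap.
    eapply Rle_trans; [|apply (hs_ub s S HS li Hli)]. apply finsum_le. intros i _.
    apply hs_ub; auto.
  - intros B HB. eapply hs_least; eauto. intros li Hli. apply (finsum_of_sums_le b); auto.
    intros lj Hlj. rewrite finsum_swap. eapply Rle_trans; [|apply (HB lj Hlj)].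
    apply finsum_le. intros j _. apply hs_ub; auto.
Qed.

Lemma hs_pair {A B : Type} (h : A * B -> R) (s : A -> R) (S : R) :
  (forall p, 0 <= h p) -> (forall a, HasSum (fun b => h (a, b)) (s a)) -> HasSum s S ->
  HasSum h S.
Proof.
  intros Hh Hs HS. apply hs_intro.
  - intros L HL. set (La := nodup decX (map fst L)). set (Lb := nodup decX (map snd L)).
    eapply Rle_trans; [apply (finsum_incl h L (list_prod La Lb)); auto|].
    + intros [a b] Hin. apply in_prod; apply nodup_In;
        [apply (in_map fst L (a, b)) | apply (in_map snd L (a, b))]; auto.
    + rewrite finsum_prod. eapply Rle_trans; [|apply (hs_ub s S HS La (NoDup_nodup _ _))].
      apply finsum_le. intros a _. apply (hs_ub _ _ (Hs a)). apply NoDup_nodup.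
  - intros B0 HB. eapply hs_least; eauto. intros La HLa.
    apply (finsum_of_sums_le (fun a b => h (a, b))); auto. intros Lb HLb.
    rewrite <- finsum_prod. apply HB. apply NoDup_prod; auto.
Qed.

Lemma hs_prod {A B : Type} (f : A -> R) (g : B -> R) s t :
  (forall a, 0 <= f a) -> (forall b, 0 <= g b) -> HasSum f s -> HasSum g t ->
  HasSum (fun p => f (fst p) * g (snd p)) (s * t).
Proof.
  intros Hf Hg Hs Ht. apply (hs_pair _ (fun a => f a * t)).
  - intros [a b]; simpl. apply Rmult_le_pos; auto.
  - intros a; simpl. apply hs_scale; auto.
  - replace (s * t) with (t * s) by ring.
    eapply hs_ext; [|apply (hs_scale t f s); auto; eapply hs_nonneg; eauto].
    intros; simpl; ring.
Qed.

Section Configurations.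
Context {X : Type}.

Definition listpow (z : X -> R) (l : list X) : R := fold_right Rmult 1 (map z l).
Definition confpow (z : X -> R) (f : SX X) : R := listpow z (particles f).

Lemma SX_eq (a b : SX X) : (forall y, cnt a y = cnt b y) -> a = b.
Proof.
  destruct a as [fa pa], b as [fb pb]; unfold cnt; simpl; intros H.
  apply subset_eq_compat. apply functional_extensionality; auto.
Qed.

Lemma count_flat_map (f : SX X) (l : list X) y : NoDup l ->
  count_occ decX (flat_map (fun w => repeat w (cnt f w)) l) y =
  if excluded_middle_informative (In y l) then cnt f y else 0%nat.
Proof.
  intros Hnd; induction Hnd as [|a l Hna Hnd IH]; simpl.
  - destruct excluded_middle_informative as [[]|]; auto.
  - rewrite count_occ_app, IH.
    destruct (excluded_middle_informative (a = y)) as [->|n].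
    + rewrite count_occ_repeat_eq; auto.
      destruct (excluded_middle_informative (In y l)); [contradiction|].
      destruct excluded_middle_informative as [|n0]; [lia | tauto].
    + rewrite count_occ_repeat_neq; auto.
      destruct (excluded_middle_informative (In y l));
      destruct (excluded_middle_informative (a = y \/ In y l)); try tauto; lia.
Qed.

Lemma count_particles (f : SX X) y : count_occ decX (particles f) y = cnt f y.
Proof.
  unfold particles.
  destruct (constructive_indefinite_description _ (proj2_sig f)) as [l Hl]; simpl.
  rewrite count_flat_map by apply NoDup_nodup.
  destruct excluded_middle_informative as [i|n]; auto.
  destruct (Nat.eq_dec (cnt f y) 0) as [e|e]; auto.
  exfalso; apply n, nodup_In, Hl; auto.
Qed.

Lemma listpow_perm z l1 l2 : Permutation l1 l2 -> listpow z l1 = listpow z l2.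
Proof.
  unfold listpow; induction 1; simpl; auto; try rewrite IHPermutation; try ring.
  rewrite IHPermutation1; auto.
Qed.

Lemma confpow_counts z (f : SX X) l : (forall y, count_occ decX l y = cnt f y) ->
  confpow z f = listpow z l.
Proof.
  intros H. apply listpow_perm, Permutation_count_occ with (eq_dec := decX).
  intros y. rewrite count_particles; auto.
Qed.

Lemma listpow_app z l1 l2 : listpow z (l1 ++ l2) = listpow z l1 * listpow z l2.
Proof. unfold listpow; induction l1 as [|a l1 IH]; simpl; [ring|]. rewrite IH; ring. Qed.

Lemma listpow_bounds z l : (forall y, 0 <= z y <= 1) -> 0 <= listpow z l <= 1.
Proof.
  intros Hz; unfold listpow; induction l as [|a l IH]; simpl; [lra|].
  specialize (Hz a). destruct IH. split; [apply Rmult_le_pos; lra | nra].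
Qed.

Lemma listpow_mono z z' l : (forall y, 0 <= z y <= z' y) -> listpow z l <= listpow z' l.
Proof.
  intros Hz; induction l as [|a l IH]; unfold listpow in *; simpl; [lra|].
  assert (0 <= fold_right Rmult 1 (map z l)).
  { clear IH; induction l; simpl; [lra|]. apply Rmult_le_pos; auto. apply Hz. }
  specialize (Hz a). apply Rmult_le_compat; lra.
Qed.

Definition sumcnt (fs : list (SX X)) (y : X) : nat :=
  fold_right (fun f acc => (cnt f y + acc)%nat) 0%nat fs.

Lemma count_superposition fs y : count_occ decX (flat_map particles fs) y = sumcnt fs y.
Proof. induction fs; simpl; auto. rewrite count_occ_app, count_particles, IHfs; auto. Qed.

Definition superposition (fs : list (SX X)) : SX X.
Proof.
  exists (sumcnt fs). exists (flat_map particles fs). intros y Hy.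
  apply (count_occ_In decX). rewrite count_superposition. lia.
Defined.

Lemma confpow_superposition z zeta fs : (forall y, cnt zeta y = sumcnt fs y) ->
  confpow z zeta = fold_right Rmult 1 (map (confpow z) fs).
Proof.
  intros H. rewrite (confpow_counts z zeta (flat_map particles fs)).
  - clear H; induction fs; simpl; auto. rewrite listpow_app, IHfs; auto.
  - intros y. rewrite count_superposition; auto.
Qed.

Lemma confpow_delta z x : confpow z (deltaC x) = z x.
Proof.
  rewrite (confpow_counts z _ [x]); [unfold listpow; simpl; ring|].
  intros y. unfold cnt, deltaC; simpl. destruct (decX x y); auto.
Qed.

Lemma confpow_empty z : confpow z (zeroC X) = 1.
Proof. apply (confpow_counts z _ []). reflexivity. Qed.

Lemma confpow_zero_nonempty zeta : zeta <> zeroC X -> confpow (fun _ => 0) zeta = 0.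
Proof.
  intros H. unfold confpow. destruct (particles zeta) as [|a l] eqn:E.
  - exfalso; apply H. apply SX_eq. intros y. rewrite <- count_particles, E. reflexivity.
  - unfold listpow; simpl; ring.
Qed.

End Configurations.

Section Branching.
Context {X : Type} (mu : X -> SX X -> R) (Hprob : is_prob mu).

Lemma mu_nonneg x f : 0 <= mu x f.
Proof. apply Hprob. Qed.

Lemma Gen_hs z : (forall y, 0 <= z y <= 1) ->
  forall p, HasSum (fun f => mu p f * confpow z f) (Gen mu z p).
Proof.
  intros Hz p. apply (hs_dominated _ (mu p) 1); [|apply Hprob].
  intros f. destruct (listpow_bounds z (particles f) Hz). pose proof (mu_nonneg p f).
  unfold confpow in *. split; nra.
Qed.

Lemma Gen_bounds z : (forall y, 0 <= z y <= 1) -> forall y, 0 <= Gen mu z y <= 1.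
Proof.
  intros Hz y. pose proof (Gen_hs z Hz y) as H. split; [eapply hs_nonneg; eauto|].
  refine (hs_le _ _ _ _ _ H (proj2 (Hprob y))).
  intros f. destruct (listpow_bounds z (particles f) Hz). pose proof (mu_nonneg y f).
  unfold confpow in *. nra.
Qed.

Lemma Gen_mono z z' : (forall y, 0 <= z y <= z' y) -> (forall y, z' y <= 1) ->
  forall y, Gen mu z y <= Gen mu z' y.
Proof.
  intros H1 H2 y.
  assert (Hz : forall w, 0 <= z w <= 1) by (intros w; specialize (H1 w); specialize (H2 w); lra).
  assert (Hz' : forall w, 0 <= z' w <= 1) by (intros w; specialize (H1 w); specialize (H2 w); lra).
  apply (hs_le (fun f => mu y f * confpow z f) (fun f => mu y f * confpow z' f));
    [|apply Gen_hs; auto | apply Gen_hs; auto].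
  intros f. apply Rmult_le_compat_l; [apply mu_nonneg | apply listpow_mono; auto].
Qed.

Definition offspring_weight (ps : list X) (fs : list (SX X)) : R :=
  fold_right (fun pf acc => mu (fst pf) (snd pf) * acc) 1 (combine ps fs).

Lemma offspring_weight_nonneg ps fs : 0 <= offspring_weight ps fs.
Proof.
  unfold offspring_weight. induction (combine ps fs); simpl; [lra|].
  apply Rmult_le_pos; auto. apply mu_nonneg.
Qed.

Definition offspring (ps : list X) := {fs : list (SX X) | length fs = length ps}.

Variable z : X -> R.
Hypothesis Hz : forall y, 0 <= z y <= 1.

Lemma prod_confpow_nonneg fs : 0 <= fold_right Rmult 1 (map (confpow z) fs).
Proof.
  induction fs; simpl; [lra|].
  apply Rmult_le_pos; auto. apply listpow_bounds; auto.
Qed.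

(* Independence of the offspring: summing over all offspring assignments,
   E[prod_i z^{f_i}] = prod_i G(z|p_i). *)
Lemma hs_offspring ps :
  HasSum (fun fs : offspring ps =>
            offspring_weight ps (proj1_sig fs) * fold_right Rmult 1 (map (confpow z) (proj1_sig fs)))
         (fold_right Rmult 1 (map (Gen mu z) ps)).
Proof.
  assert (Hnn : forall ps (fs : offspring ps), 0 <= offspring_weight ps (proj1_sig fs) *
                  fold_right Rmult 1 (map (confpow z) (proj1_sig fs))).
  { intros ? ?; apply Rmult_le_pos; [apply offspring_weight_nonneg | apply prod_confpow_nonneg]. }
  induction ps as [|p ps IH].
  - set (empty := exist (fun fs : list (SX X) => length fs = length (@nil X)) nil eq_refl).
    pose proof (hs_single _ empty (Hnn nil)) as H. simpl in H. rewrite Rmult_1_r in H. apply H.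
    intros [[|f fs] Hb] Hne; [exfalso; apply Hne; apply subset_eq_compat; auto | discriminate Hb].
  - set (cons_off := fun pr : SX X * offspring ps =>
           exist (fun fs : list (SX X) => length fs = length (p :: ps))
                 (fst pr :: proj1_sig (snd pr)) (f_equal S (proj2_sig (snd pr)))).
    apply (hs_reindex cons_off); [apply Hnn | | |].
    + intros [a1 [l1 h1]] [a2 [l2 h2]] Heq. injection Heq as -> ->.
      f_equal. apply subset_eq_compat; auto.
    + intros [[|f fs] Hb] _; [discriminate Hb|].
      injection Hb as Hlen. exists (f, exist _ fs Hlen). apply subset_eq_compat; auto.
    + eapply hs_ext; [|apply (hs_prod (fun f => mu p f * confpow z f)); [| |apply Gen_hs, Hz | apply IH]].
      * intros [f [fs h]]; unfold offspring_weight; simpl. ring.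
      * intros f; apply Rmult_le_pos; [apply mu_nonneg | apply listpow_bounds; auto].
      * intros fs; apply Hnn.
Qed.

Lemma trans_offspring xi zeta :
  trans mu xi zeta =
  tsum (fun fs : offspring (particles xi) =>
          if excluded_middle_informative (forall y, cnt zeta y = sumcnt (proj1_sig fs) y)
          then offspring_weight (particles xi) (proj1_sig fs) else 0).
Proof.
  set (ps := particles xi).
  set (restrict := fun k : {fs : list (SX X) | length fs = length ps /\
                                 forall y, cnt zeta y = sumcnt fs y} =>
         exist (fun fs : list (SX X) => length fs = length ps) (proj1_sig k) (proj1 (proj2_sig k))).
  unfold trans. fold ps. rewrite <- (tsum_reindex restrict).
  - apply tsum_ext. intros [fs [h1 h2]]. simpl.
    destruct excluded_middle_informative as [e|n]; [reflexivity | exfalso; apply n; auto].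
  - intros fs. destruct excluded_middle_informative; [apply offspring_weight_nonneg | lra].
  - intros [l1 h1] [l2 h2] Heq. injection Heq as ->. apply subset_eq_compat; auto.
  - intros [fs h] Hne. destruct excluded_middle_informative as [e|n]; [|lra].
    exists (exist _ fs (conj h e)). apply subset_eq_compat; auto.
Qed.

Lemma trans_nonneg xi zeta : 0 <= trans mu xi zeta.
Proof.
  rewrite trans_offspring. apply tsum_nonneg. intros fs.
  destruct excluded_middle_informative; [apply offspring_weight_nonneg | lra].
Qed.

Lemma branching xi :
  HasSum (fun zeta => trans mu xi zeta * confpow z zeta) (confpow (Gen mu z) xi).
Proof.
  set (ps := particles xi).
  set (matches := fun (zeta : SX X) (fs : offspring ps) =>
         if excluded_middle_informative (forall y, cnt zeta y = sumcnt (proj1_sig fs) y)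
         then offspring_weight ps (proj1_sig fs) else 0).
  assert (Hm : forall zeta fs, 0 <= matches zeta fs).
  { intros; unfold matches; destruct excluded_middle_informative; [apply offspring_weight_nonneg | lra]. }
  pose proof (tonelli (fun fs zeta => matches zeta fs * confpow z zeta)
    (fun fs => offspring_weight ps (proj1_sig fs) * fold_right Rmult 1 (map (confpow z) (proj1_sig fs)))
    (fold_right Rmult 1 (map (Gen mu z) ps))
    (fun fs zeta => Rmult_le_pos _ _ (Hm zeta fs) (proj1 (listpow_bounds z _ Hz)))) as Hton.
  eapply hs_ext; [|apply Hton; [|apply (hs_offspring ps)]].
  - intros zeta. rewrite trans_offspring. fold ps.
    rewrite (tsum_ext _ (fun fs => confpow z zeta * matches zeta fs)) by (intros; ring).
    rewrite tsum_scale by (apply listpow_bounds; auto). unfold matches; cbv beta; ring.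
  - intros fs. cbv beta.
    replace (offspring_weight ps (proj1_sig fs) * fold_right Rmult 1 (map (confpow z) (proj1_sig fs)))
      with (matches (superposition (proj1_sig fs)) fs * confpow z (superposition (proj1_sig fs))).
    + apply (hs_single (fun zeta => matches zeta fs * confpow z zeta)).
      * intros zeta; apply Rmult_le_pos; [apply Hm | apply listpow_bounds; auto].
      * intros zeta Hne. unfold matches. destruct excluded_middle_informative as [e|n]; [|lra].
        exfalso; apply Hne. apply SX_eq. intros y; rewrite e; reflexivity.
    + unfold matches. destruct excluded_middle_informative as [e|n]; [|exfalso; apply n; reflexivity].
      rewrite (confpow_superposition z _ (proj1_sig fs)); reflexivity.
Qed.

End Branching.

Section Generations.
Context {X : Type} (mu : X -> SX X -> R) (Hprob : is_prob mu).

Fixpoint Giter (n : nat) (z : X -> R) : X -> R :=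
  match n with O => z | S k => Giter k (Gen mu z) end.

Lemma Giter_bounds n : forall z, (forall y, 0 <= z y <= 1) -> forall y, 0 <= Giter n z y <= 1.
Proof. induction n; simpl; intros z Hz y; auto. apply IHn, Gen_bounds; auto. Qed.

Lemma Giter_S n : forall z, Giter (S n) z = Gen mu (Giter n z).
Proof. induction n; intros z; [reflexivity|]. simpl. rewrite <- IHn. reflexivity. Qed.

Lemma transN_nonneg n eta zeta : 0 <= transN mu n eta zeta.
Proof.
  revert zeta; induction n; intros zeta; simpl.
  - destruct excluded_middle_informative; lra.
  - apply tsum_nonneg. intros xi. apply Rmult_le_pos; auto. apply trans_nonneg; auto.
Qed.

Lemma transN_generating n : forall eta z, (forall y, 0 <= z y <= 1) ->
  HasSum (fun zeta => transN mu n eta zeta * confpow z zeta) (confpow (Giter n z) eta).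
Proof.
  induction n as [|n IH]; intros eta z Hz; simpl.
  - pose proof (hs_single (fun zeta => (if excluded_middle_informative (eta = zeta) then 1 else 0)
                                       * confpow z zeta) eta) as H.
    simpl in H. destruct (excluded_middle_informative (eta = eta)) as [_|ne]; [|congruence].
    rewrite Rmult_1_l in H. apply H.
    + intros b. destruct excluded_middle_informative; [|lra]. rewrite Rmult_1_l. apply listpow_bounds; auto.
    + intros b Hb. destruct excluded_middle_informative; [congruence | lra].
  - pose proof (tonelli (fun xi zeta => transN mu n eta xi * (trans mu xi zeta * confpow z zeta))
                        (fun xi => transN mu n eta xi * confpow (Gen mu z) xi)
                        (confpow (Giter n (Gen mu z)) eta)) as H.
    eapply hs_ext; [|apply H].
    + intros zeta. cbv beta.
      rewrite (tsum_ext _ (fun xi => confpow z zeta * (transN mu n eta xi * trans mu xi zeta)))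
        by (intros; ring).
      rewrite tsum_scale by (apply listpow_bounds; auto). ring.
    + intros xi zeta. apply Rmult_le_pos; [apply transN_nonneg|].
      apply Rmult_le_pos; [apply trans_nonneg; auto | apply listpow_bounds; auto].
    + intros xi. apply hs_scale; [apply transN_nonneg | apply branching; auto].
    + apply IH, Gen_bounds; auto.
Qed.

Definition qn (n : nat) : X -> R := Giter n (fun _ => 0).

Lemma extinction_by_generation n x : transN mu n (deltaC x) (zeroC X) = qn n x.
Proof.
  assert (Hz : forall y : X, 0 <= (fun _ : X => 0) y <= 1) by (intros; lra).
  unfold qn. rewrite <- (confpow_delta (Giter n (fun _ => 0)) x).
  eapply hs_unique; [|apply (transN_generating n _ _ Hz)].
  pose proof (hs_single (fun zeta => transN mu n (deltaC x) zeta * confpow (fun _ => 0) zeta)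
                        (zeroC X)) as H.
  cbv beta in H. rewrite confpow_empty, Rmult_1_r in H. apply H.
  - intros b. apply Rmult_le_pos; [apply transN_nonneg | apply listpow_bounds; auto].
  - intros b Hb. rewrite confpow_zero_nonempty; auto; ring.
Qed.

Lemma qn_bounds n y : 0 <= qn n y <= 1.
Proof. apply Giter_bounds; intros; lra. Qed.

Lemma qn_S n : qn (S n) = Gen mu (qn n).
Proof. apply Giter_S. Qed.

Lemma qn_incr n y : qn n y <= qn (S n) y.
Proof.
  revert y; induction n as [|n IH]; intros y.
  - pose proof (qn_bounds 1 y). unfold qn at 1; simpl; lra.
  - rewrite (qn_S (S n)), (qn_S n). apply Gen_mono; auto.
    + intros w; split; [apply qn_bounds | rewrite <- qn_S; apply IH].
    + intros; rewrite <- qn_S; apply qn_bounds.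
Qed.

Lemma qn_mono n m y : (n <= m)%nat -> qn n y <= qn m y.
Proof. induction 1; [lra|]. pose proof (qn_incr m y). lra. Qed.

Lemma qn_le_supersolution z : (forall y, 0 <= z y <= 1) -> (forall y, Gen mu z y <= z y) ->
  forall n y, qn n y <= z y.
Proof.
  intros Hz HGz; induction n; intros y.
  - apply Hz.
  - rewrite qn_S. eapply Rle_trans; [|apply HGz]. apply Gen_mono; auto.
    + intros w; split; [apply qn_bounds | auto].
    + intros; apply Hz.
Qed.

End Generations.

Lemma ge_ratio_spec b a : ge_ratio b a -> a < 1 /\ b >= a / (1 - a).
Proof. unfold ge_ratio, ratio. destruct Rlt_dec; tauto. Qed.

Lemma eq_ratio_intro b a : a < 1 -> b = a / (1 - a) -> eq_ratio b a.
Proof. unfold eq_ratio, ratio. destruct Rlt_dec; tauto. Qed.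

Lemma eq_ratio_ge b a : eq_ratio b a -> ge_ratio b a.
Proof. unfold eq_ratio, ge_ratio. destruct (ratio a); [intros ->; apply Rge_refl | tauto]. Qed.

Lemma linfrac_le_of_ratio a b : 0 <= a < 1 -> b >= a / (1 - a) -> 1 / (1 + b) <= 1 - a.
Proof.
  intros Ha Hb.
  assert (Hr : 0 <= a / (1 - a))
    by (unfold Rdiv; apply Rmult_le_pos; [lra | left; apply Rinv_0_lt_compat; lra]).
  assert (Hb' : (1 - a) * b >= a) by (assert (a / (1 - a) * (1 - a) = a) by (field; lra); nra).
  apply Rmult_le_reg_r with (1 + b); [lra|]. unfold Rdiv. rewrite Rmult_1_l, Rinv_l; nra.
Qed.

Lemma linfrac_fixed_ratio q b : 0 <= b -> q = 1 / (1 + b) -> b = (1 - q) / (1 - (1 - q)).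
Proof. intros Hb ->. field. lra. Qed.

Lemma linfrac_lipschitz a d : 0 <= a -> 0 <= d -> 1 / (1 + a) - d <= 1 / (1 + (a + d)).
Proof.
  intros Ha Hd.
  assert (1 / (1 + a) - 1 / (1 + (a + d)) = d / ((1 + a) * (1 + (a + d)))) by (field; lra).
  assert (d / ((1 + a) * (1 + (a + d))) <= d); [|lra].
  apply Rmult_le_reg_r with ((1 + a) * (1 + (a + d))); [nra|].
  unfold Rdiv. rewrite Rmult_assoc, Rinv_l by nra. nra.
Qed.

Section LinearFractional.
Context {X : Type} (mu : X -> SX X -> R) (Hprob : is_prob mu) (Hbound : bounded_mean mu)
  (HG : forall z : X -> R, (forall y, 0 <= z y <= 1) ->
        forall x, Gen mu z x = 1 / (1 + tsum (fun y => mm mu x y * (1 - z y)))).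

Lemma mm_nonneg y w : 0 <= mm mu y w.
Proof. apply tsum_nonneg. intros f. apply Rmult_le_pos; [apply pos_INR | apply mu_nonneg; auto]. Qed.

Lemma mm_row_hs y : HasSum (mm mu y) (tsum (mm mu y)).
Proof.
  destruct Hbound as [K HK]. apply hs_tsum with K. intros ly Hly.
  apply (finsum_of_sums_le (fun w f => INR (cnt f w) * mu y f)).
  - intros; apply Rmult_le_pos; [apply pos_INR | apply mu_nonneg; auto].
  - intros w. apply hs_tsum with K. intros lf Hlf.
    pose proof (HK y [w] lf (NoDup_cons _ (fun H : In _ nil => H) (NoDup_nil _)) Hlf).
    simpl in H. lra.
  - intros lf Hlf. apply HK; auto.
Qed.

Lemma Mop_hs v y : (forall w, 0 <= v w <= 1) -> HasSum (fun w => mm mu y w * v w) (Mop mu v y).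
Proof.
  intros Hv. apply (hs_dominated _ (mm mu y) (tsum (mm mu y))); [|apply mm_row_hs].
  intros w. pose proof (mm_nonneg y w). specialize (Hv w). split; nra.
Qed.

Lemma Mop_nonneg v y : (forall w, 0 <= v w <= 1) -> 0 <= Mop mu v y.
Proof. intros Hv. eapply hs_nonneg, Mop_hs, Hv. Qed.

Lemma Mop_complement z y : (forall w, 0 <= z w <= 1) ->
  Mop mu (fun w => 1 - z w) y + Mop mu z y = tsum (mm mu y).
Proof.
  intros Hz. assert (Hz' : forall w, 0 <= 1 - z w <= 1) by (intros w; specialize (Hz w); lra).
  eapply hs_unique; [|apply mm_row_hs].
  eapply hs_ext; [|apply hs_add; [| |apply (Mop_hs _ y Hz') | apply (Mop_hs _ y Hz)]].
  - intros w; cbv beta; ring.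
  - intros w. pose proof (mm_nonneg y w). specialize (Hz w). nra.
  - intros w. pose proof (mm_nonneg y w). specialize (Hz w). nra.
Qed.

Lemma Gen_linfrac z y : (forall w, 0 <= z w <= 1) ->
  Gen mu z y = 1 / (1 + Mop mu (fun w => 1 - z w) y).
Proof. intros Hz. exact (HG z Hz y). Qed.

Lemma qn_lub y : {q | is_lub (fun r => exists n, r = qn mu n y) q}.
Proof.
  apply completeness.
  - exists 1. intros r [n ->]. apply qn_bounds; auto.
  - exists (qn mu 0 y); eauto.
Qed.

Definition qlim (y : X) : R := proj1_sig (qn_lub y).

Lemma qn_le_qlim n y : qn mu n y <= qlim y.
Proof. unfold qlim. destruct (qn_lub y) as [q [Hub Hleast]]; simpl. apply Hub; eauto. Qed.

Lemma qlim_le y b : (forall n, qn mu n y <= b) -> qlim y <= b.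
Proof.
  intros H. unfold qlim. destruct (qn_lub y) as [q [Hub Hleast]]; simpl.
  apply Hleast. intros r [n ->]; auto.
Qed.

Lemma qlim_approx y e : 0 < e -> exists n, qlim y - e < qn mu n y.
Proof.
  intros He. apply NNPP. intros Hno. assert (qlim y <= qlim y - e); [|lra].
  apply qlim_le. intros n. apply Rnot_lt_le. intros Hlt. apply Hno. exists n; lra.
Qed.

Lemma qlim_bounds y : 0 < qlim y <= 1.
Proof.
  split; [|apply qlim_le; intros; apply qn_bounds; auto].
  eapply Rlt_le_trans; [|apply (qn_le_qlim 1)].
  change (qn mu 1 y) with (Gen mu (fun _ => 0) y). rewrite Gen_linfrac by (intros; lra).
  pose proof (Mop_nonneg (fun w => 1 - 0) y ltac:(intros; lra)).
  apply Rdiv_lt_0_compat; lra.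
Qed.

Lemma qlim_01 y : 0 <= qlim y <= 1.
Proof. pose proof (qlim_bounds y); lra. Qed.

Lemma Mop_qn_limit y d : 0 < d -> exists N, Mop mu qlim y - d <= Mop mu (qn mu N) y.
Proof.
  intros Hd. apply (hs_monotone_limit (fun n w => mm mu y w * qn mu n w) (fun w => mm mu y w * qlim w)).
  - intros n w. pose proof (mm_nonneg y w). pose proof (qn_bounds mu Hprob n w).
    pose proof (qn_le_qlim n w). split; nra.
  - intros n m w Hnm. apply Rmult_le_compat_l; [apply mm_nonneg | apply qn_mono; auto].
  - intros w e He. destruct (Req_dec (mm mu y w) 0) as [E|E].
    + exists 0%nat. rewrite E. lra.
    + assert (Hm : 0 < mm mu y w) by (pose proof (mm_nonneg y w); lra).
      destruct (qlim_approx w (e / mm mu y w)) as [n Hn]; [apply Rdiv_lt_0_compat; lra|].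
      exists n. apply Rmult_lt_compat_l with (r := mm mu y w) in Hn; auto.
      replace (mm mu y w * (qlim w - e / mm mu y w)) with (mm mu y w * qlim w - e) in Hn
        by (field; lra). lra.
  - apply Mop_hs, qlim_01.
  - exact Hd.
Qed.

Lemma qlim_fixed y : qlim y = Gen mu qlim y.
Proof.
  apply Rle_antisym.
  - apply qlim_le. intros [|n].
    + apply Gen_bounds; auto. apply qlim_01.
    + rewrite qn_S. apply Gen_mono; auto; [|apply qlim_01].
      intros w; split; [apply qn_bounds; auto | apply qn_le_qlim].
  - rewrite Gen_linfrac by apply qlim_01. apply Rle_plus_epsilon. intros d Hd.
    destruct (Mop_qn_limit y d Hd) as [N HN].
    pose proof (Mop_complement qlim y qlim_01).
    pose proof (Mop_complement (qn mu N) y (qn_bounds mu Hprob N)).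
    pose proof (Mop_nonneg (fun w => 1 - qlim w) y ltac:(intros w; pose proof (qlim_01 w); lra)).
    pose proof (qn_le_qlim (S N) y) as Hq.
    rewrite qn_S, Gen_linfrac in Hq by apply qn_bounds, Hprob.
    pose proof (linfrac_lipschitz (Mop mu (fun w => 1 - qlim w) y) d ltac:(lra) ltac:(lra)).
    assert (1 / (1 + (Mop mu (fun w => 1 - qlim w) y + d)) <=
            1 / (1 + Mop mu (fun w => 1 - qn mu N w) y)); [|lra].
    unfold Rdiv. rewrite !Rmult_1_l. apply Rinv_le_contravar; [|lra].
    pose proof (Mop_nonneg (fun w => 1 - qn mu N w) y
                  ltac:(intros w; pose proof (qn_bounds mu Hprob N w); lra)). lra.
Qed.

(* Survival yields a solution of M v = v/(1-v): v = 1 - q, the survival probability. *)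
Lemma survival_solution x : global_survival mu x ->
  exists v : X -> R, (forall y, 0 <= v y <= 1) /\ 0 < v x /\
    forall y, eq_ratio (Mop mu v y) (v y).
Proof.
  intros [eps [Heps Hsurv]].
  exists (fun y => 1 - qlim y). split; [|split].
  - intros y. pose proof (qlim_bounds y). lra.
  - assert (qlim x <= 1 - eps); [|lra].
    apply qlim_le. intros n. specialize (Hsurv n).
    rewrite extinction_by_generation in Hsurv; auto. lra.
  - intros y. pose proof (qlim_bounds y). apply eq_ratio_intro; [lra|].
    apply linfrac_fixed_ratio; [apply Mop_nonneg; intros w; pose proof (qlim_bounds w); lra|].
    rewrite <- Gen_linfrac by apply qlim_01. apply qlim_fixed.
Qed.

(* A supersolution M v >= v/(1-v) with v(x) > 0 forces survival with
   probability at least v(x): z = 1 - v satisfies G(z) <= z. *)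
Lemma supersolution_survival x :
  (exists v : X -> R, (forall y, 0 <= v y <= 1) /\ 0 < v x /\
     forall y, ge_ratio (Mop mu v y) (v y)) -> global_survival mu x.
Proof.
  intros [v [Hv [Hvx Hge]]].
  set (z := fun y => 1 - v y).
  assert (Hz : forall y, 0 <= z y <= 1) by (intros y; unfold z; specialize (Hv y); lra).
  assert (HGz : forall y, Gen mu z y <= z y).
  { intros y. destruct (ge_ratio_spec _ _ (Hge y)) as [Hlt Hr].
    rewrite Gen_linfrac by auto.
    replace (Mop mu (fun w => 1 - z w) y) with (Mop mu v y)
      by (apply tsum_ext; intros w; unfold z; ring).
    apply linfrac_le_of_ratio; auto. specialize (Hv y); lra. }
  exists (v x). split; auto. intros n.
  rewrite extinction_by_generation by auto.
  pose proof (qn_le_supersolution mu Hprob z Hz HGz n x). unfold z in *. lra.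
Qed.

End LinearFractional.

Theorem mainTheorem12 (X : Type) (mu : X -> SX X -> R)
  (Hprob : is_prob mu) (Hbound : bounded_mean mu)
  (HG : forall z : X -> R, (forall y, 0 <= z y <= 1) ->
        forall x, Gen mu z x = 1 / (1 + tsum (fun y => mm mu x y * (1 - z y))))
  (x : X) :
  (global_survival mu x <->
     exists v : X -> R, (forall y, 0 <= v y <= 1) /\ 0 < v x /\
       forall y, ge_ratio (Mop mu v y) (v y)) /\
  (global_survival mu x <->
     exists v : X -> R, (forall y, 0 <= v y <= 1) /\ 0 < v x /\
       forall y, eq_ratio (Mop mu v y) (v y)).
Proof.
  pose proof (survival_solution mu Hprob Hbound HG x) as Hsol.
  pose proof (supersolution_survival mu Hprob HG x) as Hsuper.
  assert (Hsol_super : (exists v : X -> R, (forall y, 0 <= v y <= 1) /\ 0 < v x /\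
                          forall y, eq_ratio (Mop mu v y) (v y)) ->
                       exists v : X -> R, (forall y, 0 <= v y <= 1) /\ 0 < v x /\
                          forall y, ge_ratio (Mop mu v y) (v y)).
  { intros [v [Hv [Hvx Heq]]]. exists v. split; [exact Hv | split; [exact Hvx |]].
    intros w. apply eq_ratio_ge, Heq. }
  tauto.
Qed.
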